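(* Let $X,Y$ be compact metric spaces with metrics $d,d'$, and let $f\colon X\to X$, $g\colon Y\to Y$ be continuous maps. Let $C\in\mathcal{C}(f)$, $D\in\mathcal{D}(C)$, $C'\in\mathcal{C}(g)$, and let $h\colon C\to C'$ be a homeomorphism with $h\circ f|_C=g|_{C'}\circ h$ (then $h(D)\in\mathcal{D}(C')$). Let $\mathcal{F},\mathcal{G}$ be full Furstenberg families, $n\ge2$ and $\delta>0$. If $g$ has the limit shadowing property and there is an $(\mathcal{F},\mathcal{G})$-$\delta$-scrambled $n$-tuple $(a_1,\dots,a_n)\in[V^s(D)]^n$ for $f$, then there are $\delta'>0$ and an $(\mathcal{F},\mathcal{G})$-$\delta'$-scrambled $n$-tuple $(b_1,\dots,b_n)\in[V^s(h(D))]^n$ for $g$.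
   Context: The following is defined for any continuous self-map $f$ of a compact metric space $(X,d)$ (and analogously for $g$ on $(Y,d')$). A $\delta$-chain of $f$ ($\delta>0$) is a finite sequence $(x_i)_{i=0}^k$, $k\ge1$, with $d(f(x_i),x_{i+1})\le\delta$ for $0\le i\le k-1$; it is a $\delta$-cycle if $x_0=x_k$, with length $k$. Write $x\to y$ if for every $\delta>0$ there is a $\delta$-chain from $x$ to $y$. Let $CR(f)=\{x\colon x\to x\}$; on $CR(f)$ let $x\leftrightarrow y$ iff $x\to y$ and $y\to x$; its classes are the chain components, forming $\mathcal{C}(f)$. For $C\in\mathcal{C}(f)$, $\delta>0$, let $m=m(C,\delta)$ be the gcd of the lengths of all $\delta$-cycles of $f|_C$, and for $x,y\in C$ let $x\sim_{C,\delta}y$ iff there is a $\delta$-chain of $f|_C$ from $x$ to $y$ of length divisible by $m$; $\mathcal{D}(C,\delta)$ is the set of its equivalence classes. Let $x\sim_C y$ iff $x\sim_{C,\delta}y$ for all $\delta>0$; $\mathcal{D}(C)$ is its set of classes. For $D\in\mathcal{D}(C)$, $D_\delta$ is the element of $\mathcal{D}(C,\delta)$ containing $D$. $W^s(C)=\{x\colon\lim_i d(f^i(x),C)=0\}$ and $V^s(D)=\bigcap_{\delta>0}\{x\in W^s(C)\colon\lim_i d(f^i(x),f^i(D_\delta))=0\}$. $g$ has the limit shadowing property if for every sequence $(y_i)_{i\ge0}$ in $Y$ with $\lim_i d'(g(y_i),y_{i+1})=0$ there is $y\in Y$ with $\lim_i d'(g^i(y),y_i)=0$. A Furstenberg family is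 a nonempty proper family $\mathcal{F}\subsetneq 2^{\mathbb{N}_0}$ closed under taking supersets; it is full if $\{i\in A\colon i\ge n\}\in\mathcal{F}$ for all $A\in\mathcal{F}$, $n\ge0$. For $x_1,\dots,x_n\in X$, $r>0$: $S_f(x_1,\dots,x_n;r)=\{i\in\mathbb{N}_0\colon\min_{j<k}d(f^i(x_j),f^i(x_k))>r\}$ and $T_f(x_1,\dots,x_n;r)=\{i\in\mathbb{N}_0\colon\max_{j<k}d(f^i(x_j),f^i(x_k))<r\}$. $(x_1,\dots,x_n)$ is $(\mathcal{F},\mathcal{G})$-$\delta$-scrambled for $f$ if $S_f(x_1,\dots,x_n;\delta)\in\mathcal{F}$ and $T_f(x_1,\dots,x_n;\epsilon)\in\mathcal{G}$ for all $\epsilon>0$ (analogously for $g$ with $d'$). *)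

From Stdlib Require Import Reals Lra Lia List.
Open Scope R_scope.

Section Defs.
Context {X : Type} (d : X -> X -> R).

Definition is_metric : Prop :=
  (forall x y, 0 <= d x y) /\ (forall x y, d x y = 0 <-> x = y) /\
  (forall x y, d x y = d y x) /\ (forall x y z, d x z <= d x y + d y z).

Definition open_set (U : X -> Prop) : Prop :=
  forall x, U x -> exists r, 0 < r /\ forall y, d x y < r -> U y.

Definition compact_space : Prop :=
  forall (I : Type) (U : I -> X -> Prop),
    (forall i, open_set (U i)) -> (forall x, exists i, U i x) ->
    exists l : list I, forall x, exists i, In i l /\ U i x.

Definition continuous_map (f : X -> X) : Prop :=
  forall x eps, 0 < eps -> exists del, 0 < del /\
    forall y, d x y < del -> d (f x) (f y) < eps.

Definition chain_in (f : X -> X) (C : X -> Prop) (del : R) (x y : X) (k : nat) : Prop :=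
  (1 <= k)%nat /\ exists s : nat -> X, s O = x /\ s k = y /\
    (forall i, (i <= k)%nat -> C (s i)) /\
    (forall i, (i < k)%nat -> d (f (s i)) (s (S i)) <= del).

Definition chains_to (f : X -> X) (x y : X) : Prop :=
  forall del, 0 < del -> exists k, chain_in f (fun _ => True) del x y k.

Definition CR (f : X -> X) (x : X) : Prop := chains_to f x x.

Definition chain_component (f : X -> X) (C : X -> Prop) : Prop :=
  exists x, CR f x /\
    forall y, C y <-> (CR f y /\ chains_to f x y /\ chains_to f y x).

Definition cycle_gcd (f : X -> X) (C : X -> Prop) (del : R) (m : nat) : Prop :=
  (forall x k, chain_in f C del x x k -> Nat.divide m k) /\
  (forall m', (forall x k, chain_in f C del x x k -> Nat.divide m' k) -> Nat.divide m' m).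

Definition sim_Cdel (f : X -> X) (C : X -> Prop) (del : R) (x y : X) : Prop :=
  C x /\ C y /\ exists m, cycle_gcd f C del m /\
    exists k, chain_in f C del x y k /\ Nat.divide m k.

Definition sim_C (f : X -> X) (C : X -> Prop) (x y : X) : Prop :=
  forall del, 0 < del -> sim_Cdel f C del x y.

Definition D_class (f : X -> X) (C D : X -> Prop) : Prop :=
  exists x, C x /\ forall y, D y <-> (C y /\ sim_C f C x y).

(* D_delta : the element of D(C, delta) containing D *)
Definition D_delta (f : X -> X) (C D : X -> Prop) (del : R) (y : X) : Prop :=
  C y /\ exists x, D x /\ sim_Cdel f C del x y.

Definition dist_to_sets_tends_0 (z : nat -> X) (A : nat -> X -> Prop) : Prop :=
  forall eps, 0 < eps -> exists N, forall i, (N <= i)%nat ->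
    exists a, A i a /\ d (z i) a < eps.

Definition Ws (f : X -> X) (C : X -> Prop) (x : X) : Prop :=
  dist_to_sets_tends_0 (fun i => Nat.iter i f x) (fun _ => C).

Definition Vs (f : X -> X) (C D : X -> Prop) (x : X) : Prop :=
  forall del, 0 < del -> Ws f C x /\
    dist_to_sets_tends_0 (fun i => Nat.iter i f x)
      (fun i y => exists w, D_delta f C D del w /\ y = Nat.iter i f w).

Definition limit_shadowing (g : X -> X) : Prop :=
  forall y : nat -> X,
    (forall eps, 0 < eps -> exists N, forall i, (N <= i)%nat -> d (g (y i)) (y (S i)) < eps) ->
    exists z, forall eps, 0 < eps -> exists N, forall i, (N <= i)%nat ->
      d (Nat.iter i g z) (y i) < eps.

(* S_f(x_1..x_n; r) and T_f(x_1..x_n; r), tuple indexed by 0..n-1 *)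
Definition S_set (f : X -> X) (n : nat) (a : nat -> X) (r : R) (i : nat) : Prop :=
  forall j k, (j < k)%nat -> (k < n)%nat -> d (Nat.iter i f (a j)) (Nat.iter i f (a k)) > r.

Definition T_set (f : X -> X) (n : nat) (a : nat -> X) (r : R) (i : nat) : Prop :=
  forall j k, (j < k)%nat -> (k < n)%nat -> d (Nat.iter i f (a j)) (Nat.iter i f (a k)) < r.

Definition scrambled (f : X -> X) (F G : (nat -> Prop) -> Prop)
  (n : nat) (a : nat -> X) (del : R) : Prop :=
  F (S_set f n a del) /\ forall eps, 0 < eps -> G (T_set f n a eps).

End Defs.

Definition furstenberg_family (F : (nat -> Prop) -> Prop) : Prop :=
  (exists A, F A) /\ (exists A, ~ F A) /\
  (forall A B : nat -> Prop, F A -> (forall i, A i -> B i) -> F B).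

Definition full_family (F : (nat -> Prop) -> Prop) : Prop :=
  furstenberg_family F /\
  forall A n, F A -> F (fun i => A i /\ (n <= i)%nat).

Definition homeo_between {X Y : Type} (d : X -> X -> R) (d' : Y -> Y -> R)
  (C : X -> Prop) (C' : Y -> Prop) (h : X -> Y) (hinv : Y -> X) : Prop :=
  (forall x, C x -> C' (h x)) /\ (forall y, C' y -> C (hinv y)) /\
  (forall x, C x -> hinv (h x) = x) /\ (forall y, C' y -> h (hinv y) = y) /\
  (forall x eps, C x -> 0 < eps -> exists del, 0 < del /\
     forall z, C z -> d x z < del -> d' (h x) (h z) < eps) /\
  (forall y eps, C' y -> 0 < eps -> exists del, 0 < del /\
     forall z, C' z -> d' y z < del -> d (hinv y) (hinv z) < eps).

From Stdlib Require Import Reals Lra Lia List Classical ClassicalEpsilon Wf_nat.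
From Coquelicot Require Import Hierarchy.
Open Scope R_scope.

(* The conjugacy h transports everything that only depends on how orbits
   approach C.  If a lies in V^s(D), then f^i(a) is asymptotic to a sequence
   c_i of C, which is an asymptotic pseudo-orbit of f; as h is uniformly
   continuous on the compact set C, h(c_i) is an asymptotic pseudo-orbit of g,
   and limit shadowing gives b with g^i(b) asymptotic to h(c_i).  Since h maps
   delta-chains of f|_C to delta'-chains of g|_C' of the same length, it maps
   D_delta into h(D)_delta', whence b lies in V^s(h(D)).  Finally, uniform
   continuity of h and of its inverse turns eventual separation (resp.
   proximity) of the f^i(a_j) into eventual separation (resp. proximity) of
   the g^i(b_j), and full families ignore finitely many times. *)

Definition tends_to_0 (u : nat -> R) : Prop :=
  forall eps, 0 < eps -> eventually (fun i => u i < eps).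

Definition asymptotic {X : Type} (d : X -> X -> R) (u v : nat -> X) : Prop :=
  tends_to_0 (fun i => d (u i) (v i)).

Definition asymptotic_pseudo_orbit {X : Type} (d : X -> X -> R) (f : X -> X)
  (c : nat -> X) : Prop :=
  tends_to_0 (fun i => d (f (c i)) (c (S i))).

Definition is_closed {X : Type} (d : X -> X -> R) (K : X -> Prop) : Prop :=
  forall z, (forall r, 0 < r -> exists c, K c /\ d z c < r) -> K z.

Definition continuous_on {X Y : Type} (d : X -> X -> R) (d' : Y -> Y -> R)
  (K : X -> Prop) (phi : X -> Y) : Prop :=
  forall x eps, K x -> 0 < eps -> exists del, 0 < del /\
    forall z, K z -> d x z < del -> d' (phi x) (phi z) < eps.

Definition uniformly_continuous_on {X Y : Type} (d : X -> X -> R) (d' : Y -> Y -> R)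
  (K : X -> Prop) (phi : X -> Y) : Prop :=
  forall eps, 0 < eps -> exists del, 0 < del /\
    forall x z, K x -> K z -> d x z < del -> d' (phi x) (phi z) < eps.

Lemma finite_choice {B : Type} (P : nat -> B -> Prop) (n : nat) :
  (0 < n)%nat -> (forall j, (j < n)%nat -> exists b, P j b) ->
  exists q : nat -> B, forall j, (j < n)%nat -> P j (q j).
Proof.
  intros Hn HP. destruct (HP 0%nat Hn) as [b0 _].
  destruct (choice (fun j b => (j < n)%nat -> P j b)) as [q Hq].
  - intros j. destruct (Nat.lt_ge_cases j n) as [Hj|Hj].
    + destruct (HP j Hj) as [b Hb]. exists b. intros _. exact Hb.
    + exists b0. intros Hj'. lia.
  - exists q. exact Hq.
Qed.

Lemma list_pos_lower_bound {A : Type} (P : A -> Prop) (r : A -> R) (l : list A) :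
  (forall a, P a -> 0 < r a) -> exists m, 0 < m /\ forall a, In a l -> P a -> m <= r a.
Proof.
  intros Hr. induction l as [|a l [m [Hm Hl]]].
  - exists 1. split; [lra|]. intros a [].
  - destruct (classic (P a)) as [Ha|Ha].
    + exists (Rmin (r a) m). split; [apply Rmin_glb_lt; auto|].
      intros b [<-|Hb] Pb; [apply Rmin_l|].
      eapply Rle_trans; [apply Rmin_r | auto].
    + exists m. split; [exact Hm|]. intros b [<-|Hb] Pb; [contradiction | auto].
Qed.

Lemma nat_set_gcd_exists (P : nat -> Prop) :
  exists m, (forall k, P k -> Nat.divide m k) /\
    (forall m', (forall k, P k -> Nat.divide m' k) -> Nat.divide m' m).
Proof.
  destruct (classic (exists k, P k /\ k <> 0%nat)) as [[k0 [Hk0 Hk0_pos]] | Hzero].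
  - (* the least positive number divisible by every common divisor of P *)
    set (T := fun t => (0 < t)%nat /\
                forall c, (forall k, P k -> Nat.divide c k) -> Nat.divide c t).
    destruct (dec_inh_nat_subset_has_unique_least_element T (fun t => classic (T t)))
      as [m [[[Hm Hm_common] Hm_least] _]].
    { exists k0. split; [lia|]. intros c Hc. apply Hc, Hk0. }
    exists m. split; [|exact Hm_common].
    intros k Hk.
    assert (Hgcd : T (Nat.gcd m k)).
    { split.
      - apply Nat.neq_0_lt_0. intros E. apply Nat.gcd_eq_0 in E. lia.
      - intros c Hc. apply Nat.gcd_greatest; [apply Hm_common, Hc | apply Hc, Hk]. }
    assert (E : Nat.gcd m k = m).
    { apply Nat.le_antisymm; [|apply Hm_least, Hgcd].
      apply Nat.divide_pos_le; [exact Hm | apply Nat.gcd_divide_l]. }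
    rewrite <- E. apply Nat.gcd_divide_r.
  - exists 0%nat. split.
    + intros k Hk. destruct (Nat.eq_dec k 0) as [->|Hk0]; [apply Nat.divide_refl|].
      exfalso. eauto.
    + intros m' _. apply Nat.divide_0_r.
Qed.

Lemma eventually_forall_lt (n : nat) (Q : nat -> nat -> Prop) :
  (forall j, (j < n)%nat -> eventually (Q j)) ->
  eventually (fun i => forall j, (j < n)%nat -> Q j i).
Proof.
  induction n as [|n IH]; intros HQ.
  - apply filter_forall. intros i j Hj. lia.
  - apply (filter_imp (fun i => (forall j, (j < n)%nat -> Q j i) /\ Q n i)).
    + intros i [Hlt Hn] j Hj.
      destruct (Nat.eq_dec j n) as [->|Hne]; [exact Hn | apply Hlt; lia].
    + apply filter_and; [apply IH; intros j Hj|]; apply HQ; lia.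
Qed.

Lemma eventually_forall_pairs (n : nat) (Q : nat -> nat -> nat -> Prop) :
  (forall j k, (j < k)%nat -> (k < n)%nat -> eventually (Q j k)) ->
  eventually (fun i => forall j k, (j < k)%nat -> (k < n)%nat -> Q j k i).
Proof.
  intros HQ.
  apply (filter_imp (fun i => forall k, (k < n)%nat -> forall j, (j < k)%nat -> Q j k i)).
  - intros i Hi j k Hjk Hkn. exact (Hi k Hkn j Hjk).
  - apply eventually_forall_lt. intros k Hk.
    apply eventually_forall_lt. intros j Hj. exact (HQ j k Hj Hk).
Qed.

Lemma full_family_eventually_superset (F : (nat -> Prop) -> Prop) (A B : nat -> Prop) :
  full_family F -> F A -> eventually (fun i => A i -> B i) -> F B.
Proof.
  intros [[_ [_ Hsuper]] Htail] HA [N HN].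
  apply (Hsuper (fun i => A i /\ (N <= i)%nat)); [exact (Htail A N HA)|].
  intros i [Hi HNi]. exact (HN i HNi Hi).
Qed.

Lemma exists_point_below_thresholds {X : Type} (A : X -> Prop) (u : X -> R)
  (t : nat -> R) (m : nat) :
  (forall k k', (k <= k')%nat -> t k' <= t k) -> (exists c, A c) ->
  exists c, A c /\ forall k, (k < m)%nat -> (exists c', A c' /\ u c' < t k) -> u c < t k.
Proof.
  intros Ht HA. induction m as [|m [c [Hc Hcm]]].
  - destruct HA as [c Hc]. exists c. split; [exact Hc|]. intros k Hk. lia.
  - destruct (classic (exists c', A c' /\ u c' < t m)) as [[c' [Hc' Hu]] | Hn].
    + exists c'. split; [exact Hc'|]. intros k Hk _. pose proof (Ht k m ltac:(lia)). lra.
    + exists c. split; [exact Hc|]. intros k Hk Hex.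
      destruct (Nat.eq_dec k m) as [->|Hne]; [contradiction | apply Hcm; [lia | exact Hex]].
Qed.

Lemma approximating_sequence {X : Type} (d : X -> X -> R) (xs : nat -> X) (A : X -> Prop) :
  dist_to_sets_tends_0 d xs (fun _ => A) ->
  exists c : nat -> X, (forall i, A (c i)) /\ asymptotic d xs c.
Proof.
  intros Hxs.
  set (t := fun k => / INR (S k)).
  assert (Ht : forall k k', (k <= k')%nat -> t k' <= t k).
  { intros k k' Hk. apply Rinv_le_contravar; [apply lt_0_INR; lia | apply le_INR; lia]. }
  assert (HA : exists c, A c).
  { destruct (Hxs 1 Rlt_0_1) as [N HN]. destruct (HN N (le_n N)) as [c [Hc _]]. eauto. }
  destruct (choice (fun i c => A c /\ forall k, (k < i)%nat ->
              (exists c', A c' /\ d (xs i) c' < t k) -> d (xs i) c < t k)) as [c Hc].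
  { intros i. exact (exists_point_below_thresholds A (d (xs i)) t i Ht HA). }
  exists c. split; [intros i; apply Hc|].
  intros eps Heps. destruct (archimed_cor1 eps Heps) as [K [HK HK_pos]].
  destruct (Hxs (t K)) as [N HN]; [apply Rinv_0_lt_compat, lt_0_INR; lia|].
  exists (max N (S K)). intros i Hi.
  apply Rlt_trans with (t K); [apply (proj2 (Hc i)); [lia | apply HN; lia]|].
  eapply Rle_lt_trans; [|exact HK].
  apply Rinv_le_contravar; [apply lt_0_INR; lia | apply le_INR; lia].
Qed.

Lemma iter_invariant {X : Type} (f : X -> X) (C : X -> Prop) :
  (forall x, C x -> C (f x)) -> forall i x, C x -> C (Nat.iter i f x).
Proof. intros Hf i x Hx. induction i as [|i IH]; simpl; auto. Qed.

Section MetricSpace.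

Context {X : Type} (d : X -> X -> R) (Hd : is_metric d).

Lemma dist_refl x : d x x = 0.
Proof. destruct Hd as (_ & Hsep & _). now apply Hsep. Qed.

Lemma dist_sym x y : d x y = d y x.
Proof. destruct Hd as (_ & _ & Hsym & _). apply Hsym. Qed.

Lemma dist_nonneg x y : 0 <= d x y.
Proof. destruct Hd as (Hpos & _). apply Hpos. Qed.

Lemma dist_triangle x y z : d x z <= d x y + d y z.
Proof. destruct Hd as (_ & _ & _ & Htri). apply Htri. Qed.

Lemma dist_asymptotic_diff (u v u' v' : nat -> X) :
  asymptotic d u v -> asymptotic d u' v' ->
  forall eps, 0 < eps -> eventually (fun i => Rabs (d (u i) (u' i) - d (v i) (v' i)) < eps).
Proof.
  intros Huv Hu'v' eps Heps.
  apply (filter_imp (fun i => d (u i) (v i) < eps / 2 /\ d (u' i) (v' i) < eps / 2)).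
  - intros i [H1 H2].
    pose proof (dist_triangle (u i) (v i) (u' i)) as T1.
    pose proof (dist_triangle (v i) (v' i) (u' i)) as T2.
    pose proof (dist_triangle (v i) (u i) (v' i)) as T3.
    pose proof (dist_triangle (u i) (u' i) (v' i)) as T4.
    rewrite (dist_sym (v' i) (u' i)) in T2. rewrite (dist_sym (v i) (u i)) in T3.
    apply Rabs_def1; lra.
  - apply filter_and; [apply Huv | apply Hu'v']; lra.
Qed.

Lemma closed_compl_pos_dist (K : X -> Prop) x :
  is_closed d K -> ~ K x -> exists s, 0 < s /\ forall c, K c -> s <= d x c.
Proof.
  intros HK Hx. apply NNPP. intros Hn. apply Hx, HK. intros r Hr.
  apply NNPP. intros Hr'. apply Hn. exists r. split; [exact Hr|].
  intros c Hc. apply Rnot_lt_le. intros Hlt. apply Hr'. eauto.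
Qed.

(* Lebesgue-number argument: the balls B(p, r p), p in K, together with the
   complement of K form an open cover. *)
Lemma compact_closed_uniform_radius (K : X -> Prop) (r : X -> R) :
  compact_space d -> is_closed d K -> (forall p, K p -> 0 < r p) ->
  exists m, 0 < m /\ forall x, K x -> exists p, K p /\ d p x < r p /\ m <= r p.
Proof.
  intros Hcpt HK Hr.
  set (away := fun z => exists s, 0 < s /\ forall c, K c -> s <= d z c).
  destruct (Hcpt X (fun p z => (K p /\ d p z < r p) \/ (~ K p /\ away z))) as [l Hl].
  - intros p z [[Hp Hz] | [Hp [s [Hs Hsz]]]].
    + exists (r p - d p z). split; [lra|]. intros y Hy. left. split; [exact Hp|].
      pose proof (dist_triangle p z y). lra.
    + exists (s / 2). split; [lra|]. intros y Hy. right. split; [exact Hp|].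
      exists (s / 2). split; [lra|]. intros c Hc.
      pose proof (Hsz c Hc). pose proof (dist_triangle z y c). lra.
  - intros x. exists x. destruct (classic (K x)) as [Hx|Hx].
    + left. rewrite dist_refl. auto.
    + right. split; [exact Hx | apply closed_compl_pos_dist; assumption].
  - destruct (list_pos_lower_bound K r l Hr) as [m [Hm Hml]].
    exists m. split; [exact Hm|]. intros x Hx.
    destruct (Hl x) as [p [Hpl [[Hp Hpx] | [_ [s [Hs Hsx]]]]]].
    + exists p. auto.
    + specialize (Hsx x Hx). rewrite dist_refl in Hsx. lra.
Qed.

Lemma asymptotic_orbit_pseudo_orbit (f : X -> X) x (c : nat -> X) :
  uniformly_continuous_on d d (fun _ => True) f ->
  asymptotic d (fun i => Nat.iter i f x) c -> asymptotic_pseudo_orbit d f c.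
Proof.
  intros Hf Hc eps Heps. destruct (Hf (eps / 2) ltac:(lra)) as [rho [Hrho Hcont]].
  destruct (Hc (Rmin rho (eps / 2))) as [N HN]; [apply Rmin_glb_lt; lra|].
  exists N. intros i Hi.
  pose proof (HN i Hi) as Hi0. pose proof (HN (S i) ltac:(lia)) as Hi1. simpl in Hi1.
  pose proof (Rmin_l rho (eps / 2)). pose proof (Rmin_r rho (eps / 2)).
  assert (Hf_close : d (f (Nat.iter i f x)) (f (c i)) < eps / 2)
    by (apply Hcont; auto; lra).
  pose proof (dist_triangle (f (c i)) (f (Nat.iter i f x)) (c (S i))) as T.
  rewrite (dist_sym (f (c i)) (f (Nat.iter i f x))) in T. lra.
Qed.

End MetricSpace.

Lemma compact_uniformly_continuous_on {X Y : Type} (d : X -> X -> R) (d' : Y -> Y -> R)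
  (K : X -> Prop) (phi : X -> Y) :
  is_metric d -> is_metric d' -> compact_space d -> is_closed d K ->
  continuous_on d d' K phi -> uniformly_continuous_on d d' K phi.
Proof.
  intros Hd Hd' Hcpt HK Hphi eps Heps.
  destruct (choice (fun x s => K x -> 0 < s /\
              forall z, K z -> d x z < s -> d' (phi x) (phi z) < eps / 2)) as [s Hs].
  { intros x. destruct (classic (K x)) as [Hx|Hx].
    - destruct (Hphi x (eps / 2) Hx ltac:(lra)) as [s Hs]. exists s. auto.
    - exists 0. intros Hx'. contradiction. }
  destruct (compact_closed_uniform_radius d Hd K (fun p => s p / 2) Hcpt HK) as [m [Hm Hcov]].
  { intros p Hp. destruct (Hs p Hp). lra. }
  exists m. split; [exact Hm|]. intros x z Hx Hz Hxz.
  destruct (Hcov x Hx) as [p [Hp [Hpx Hmp]]].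
  destruct (Hs p Hp) as [_ Hcont].
  pose proof (dist_triangle d Hd p x z).
  assert (Hpx' : d' (phi p) (phi x) < eps / 2) by (apply Hcont; [exact Hx | lra]).
  assert (Hpz' : d' (phi p) (phi z) < eps / 2) by (apply Hcont; [exact Hz | lra]).
  pose proof (dist_triangle d' Hd' (phi x) (phi p) (phi z)) as T.
  rewrite (dist_sym d' Hd' (phi x) (phi p)) in T. lra.
Qed.

Section Chains.

Context {X : Type} (d : X -> X -> R) (Hd : is_metric d) (f : X -> X).

Lemma chain_in_weaken C del del' x y k :
  del <= del' -> chain_in d f C del x y k -> chain_in d f C del' x y k.
Proof.
  intros Hle [Hk [s (Hs0 & Hsk & HsC & Hsteps)]]. split; [exact Hk|].
  exists s. repeat split; auto. intros i Hi. specialize (Hsteps i Hi). lra.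
Qed.

Lemma chain_in_app C del x y z k l :
  chain_in d f C del x y k -> chain_in d f C del y z l -> chain_in d f C del x z (k + l).
Proof.
  intros [Hk [s (Hs0 & Hsk & HsC & Hs)]] [Hl [t (Ht0 & Htl & HtC & Ht)]].
  split; [lia|].
  exists (fun i => if Nat.leb i k then s i else t (i - k)%nat).
  repeat split.
  - exact Hs0.
  - destruct (Nat.leb_spec (k + l) k); [lia|]. now replace (k + l - k)%nat with l by lia.
  - intros i Hi. destruct (Nat.leb_spec i k); [apply HsC | apply HtC]; lia.
  - intros i Hi. destruct (Nat.leb_spec i k), (Nat.leb_spec (S i) k).
    + apply Hs. lia.
    + replace i with k by lia. rewrite Hsk, <- Ht0.
      replace (S k - k)%nat with 1%nat by lia. apply Ht. lia.
    + lia.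
    + replace (S i - k)%nat with (S (i - k)) by lia. apply Ht. lia.
Qed.

Lemma chains_to_trans x y z : chains_to d f x y -> chains_to d f y z -> chains_to d f x z.
Proof.
  intros Hxy Hyz del Hdel.
  destruct (Hxy del Hdel) as [k Hk]. destruct (Hyz del Hdel) as [l Hl].
  exists (k + l)%nat. exact (chain_in_app _ _ _ _ _ _ _ Hk Hl).
Qed.

Lemma chains_to_image x : chains_to d f x (f x).
Proof.
  intros del Hdel. exists 1%nat. split; [lia|].
  exists (fun i => match i with O => x | _ => f x end). repeat split.
  intros i Hi. replace i with 0%nat by lia. rewrite dist_refl by exact Hd. lra.
Qed.

Lemma chain_in_move_end del e x y z k :
  d y z <= e -> chain_in d f (fun _ => True) del x y k ->
  chain_in d f (fun _ => True) (del + e) x z k.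
Proof.
  intros Hyz [Hk [s (Hs0 & Hsk & _ & Hs)]]. split; [exact Hk|].
  exists (fun i => if Nat.eqb i k then z else s i). repeat split.
  - destruct (Nat.eqb_spec 0 k); [lia | exact Hs0].
  - now rewrite Nat.eqb_refl.
  - intros i Hi. destruct (Nat.eqb_spec i k); [lia|].
    pose proof (Hs i Hi). destruct (Nat.eqb_spec (S i) k) as [<-|_].
    + pose proof (dist_triangle d Hd (f (s i)) (s (S i)) z). rewrite <- Hsk in Hyz. lra.
    + pose proof (dist_nonneg d Hd y z). lra.
Qed.

Lemma chain_in_move_start del e x y z k :
  d (f z) (f x) <= e -> chain_in d f (fun _ => True) del x y k ->
  chain_in d f (fun _ => True) (del + e) z y k.
Proof.
  intros Hz [Hk [s (Hs0 & Hsk & _ & Hs)]]. split; [exact Hk|].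
  exists (fun i => if Nat.eqb i 0 then z else s i). repeat split.
  - destruct (Nat.eqb_spec k 0); [lia | exact Hsk].
  - intros i Hi. pose proof (Hs i Hi). destruct (Nat.eqb_spec i 0) as [->|_]; simpl.
    + pose proof (dist_triangle d Hd (f z) (f x) (s 1%nat)). rewrite Hs0 in *. lra.
    + pose proof (dist_nonneg d Hd (f z) (f x)). lra.
Qed.

Lemma chain_in_behead C del x y k :
  (2 <= k)%nat -> chain_in d f C del x y k ->
  exists x1, d (f x) x1 <= del /\ chain_in d f C del x1 y (k - 1).
Proof.
  intros Hk2 [_ [s (Hs0 & Hsk & HsC & Hs)]].
  exists (s 1%nat). split; [rewrite <- Hs0; apply Hs; lia|].
  split; [lia|]. exists (fun i => s (S i)). repeat split.
  - now replace (S (k - 1)) with k by lia.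
  - intros i Hi. apply HsC. lia.
  - intros i Hi. apply Hs. lia.
Qed.

(* Going twice around a cycle through x gives a chain of length at least 2;
   dropping its first point and restarting at f x costs only a small error by
   continuity of f at f x. *)
Lemma CR_chains_to_from_image x :
  continuous_map d f -> CR d f x -> chains_to d f (f x) x.
Proof.
  intros Hf Hx del Hdel.
  destruct (Hf (f x) (del / 2) ltac:(lra)) as [rho [Hrho Hcont]].
  assert (Hdel0 : 0 < Rmin (del / 2) (rho / 2)) by (apply Rmin_glb_lt; lra).
  pose proof (Rmin_l (del / 2) (rho / 2)). pose proof (Rmin_r (del / 2) (rho / 2)).
  set (del0 := Rmin (del / 2) (rho / 2)) in *.
  destruct (Hx del0 Hdel0) as [k Hk].
  assert (Hk1 : (1 <= k)%nat) by apply Hk.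
  destruct (chain_in_behead _ _ x x (k + k) ltac:(lia) (chain_in_app _ _ _ _ _ _ _ Hk Hk))
    as [x1 [Hx1 Hchain]].
  exists (k + k - 1)%nat.
  apply chain_in_weaken with (del0 + del / 2); [lra|].
  apply chain_in_move_start with x1; [|exact Hchain].
  left. apply Hcont. lra.
Qed.

Lemma chain_component_closed C :
  continuous_map d f -> chain_component d f C -> is_closed d C.
Proof.
  intros Hf [x0 [_ HC]] z Hz.
  assert (Hto : chains_to d f x0 z).
  { intros del Hdel. destruct (Hz (del / 2) ltac:(lra)) as [c [Hc Hzc]].
    destruct (proj1 (HC c) Hc) as (_ & Hx0c & _).
    destruct (Hx0c (del / 2) ltac:(lra)) as [k Hk]. exists k.
    apply chain_in_weaken with (del / 2 + del / 2); [lra|].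
    apply chain_in_move_end with c; [|exact Hk].
    rewrite dist_sym by exact Hd. lra. }
  assert (Hfrom : chains_to d f z x0).
  { intros del Hdel. destruct (Hf z (del / 2) ltac:(lra)) as [rho [Hrho Hcont]].
    destruct (Hz rho Hrho) as [c [Hc Hzc]].
    destruct (proj1 (HC c) Hc) as (_ & _ & Hcx0).
    destruct (Hcx0 (del / 2) ltac:(lra)) as [k Hk]. exists k.
    apply chain_in_weaken with (del / 2 + del / 2); [lra|].
    apply chain_in_move_start with c; [left; apply Hcont, Hzc | exact Hk]. }
  apply HC. split; [|split]; [apply (chains_to_trans z x0 z) | |]; assumption.
Qed.

Lemma chain_component_invariant C x :
  continuous_map d f -> chain_component d f C -> C x -> C (f x).
Proof.
  intros Hf [x0 [_ HC]] Hx. destruct (proj1 (HC x) Hx) as (HCRx & Hx0x & Hxx0).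
  pose proof (chains_to_image x) as Hxfx.
  pose proof (CR_chains_to_from_image x Hf HCRx) as Hfxx.
  apply HC. split; [|split].
  - exact (chains_to_trans _ _ _ Hfxx Hxfx).
  - exact (chains_to_trans _ _ _ Hx0x Hxfx).
  - exact (chains_to_trans _ _ _ Hfxx Hxx0).
Qed.

End Chains.

Section Conjugacy.

Context {X Y : Type} (d : X -> X -> R) (d' : Y -> Y -> R) (f : X -> X) (g : Y -> Y)
  (C : X -> Prop) (C' : Y -> Prop) (h : X -> Y) (hinv : Y -> X).

Hypothesis Hd : is_metric d.
Hypothesis Hd' : is_metric d'.
Hypothesis C_invariant : forall x, C x -> C (f x).
Hypothesis h_maps_C : forall x, C x -> C' (h x).
Hypothesis h_conj : forall x, C x -> h (f x) = g (h x).
Hypothesis h_unif : uniformly_continuous_on d d' C h.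
Hypothesis hinv_unif : uniformly_continuous_on d' d C' hinv.
Hypothesis hinv_h : forall x, C x -> hinv (h x) = x.

Lemma iter_conj i x : C x -> h (Nat.iter i f x) = Nat.iter i g (h x).
Proof.
  intros Hx. induction i as [|i IH]; simpl; [reflexivity|].
  rewrite h_conj by (apply iter_invariant; assumption). now rewrite IH.
Qed.

Lemma chain_in_conj del' :
  0 < del' -> exists del, 0 < del /\
    forall x y k, chain_in d f C del x y k -> chain_in d' g C' del' (h x) (h y) k.
Proof.
  intros Hdel'. destruct (h_unif del' Hdel') as [rho [Hrho Hh]].
  exists (rho / 2). split; [lra|].
  intros x y k [Hk [s (Hs0 & Hsk & HsC & Hs)]]. split; [exact Hk|].
  exists (fun i => h (s i)). repeat split.
  - now rewrite Hs0.
  - now rewrite Hsk.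
  - intros i Hi. apply h_maps_C, HsC, Hi.
  - intros i Hi. rewrite <- h_conj by (apply HsC; lia). left.
    apply Hh; [apply C_invariant, HsC; lia | apply HsC; lia |].
    specialize (Hs i Hi). lra.
Qed.

Lemma D_delta_conj D del' :
  0 < del' -> exists del, 0 < del /\ forall w, D_delta d f C D del w ->
    D_delta d' g C' (fun y => exists x, D x /\ y = h x) del' (h w).
Proof.
  intros Hdel'. destruct (chain_in_conj del' Hdel') as [del [Hdel Hmap]].
  exists del. split; [exact Hdel|].
  intros w [Hw [x [Hx [HCx [_ [m [[_ Hm_greatest] [k [Hk Hmk]]]]]]]]].
  destruct (nat_set_gcd_exists (fun l => exists y, chain_in d' g C' del' y y l))
    as [m' [Hm'_div Hm'_greatest]].
  split; [apply h_maps_C, Hw|]. exists (h x). split; [exists x; auto|].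
  split; [apply h_maps_C, HCx|]. split; [apply h_maps_C, Hw|].
  exists m'. split; [split|].
  - intros y l Hl. apply Hm'_div. eauto.
  - intros m'' Hm''. apply Hm'_greatest. intros l [y Hy]. exact (Hm'' y l Hy).
  - exists k. split; [exact (Hmap _ _ _ Hk)|].
    apply Nat.divide_trans with m; [|exact Hmk].
    apply Hm_greatest. intros z l Hl. apply Hm'_div. exists (h z). exact (Hmap _ _ _ Hl).
Qed.

Lemma pseudo_orbit_conj (c : nat -> X) :
  (forall i, C (c i)) -> asymptotic_pseudo_orbit d f c ->
  asymptotic_pseudo_orbit d' g (fun i => h (c i)).
Proof.
  intros HcC Hc eps Heps. destruct (h_unif eps Heps) as [rho [Hrho Hh]].
  apply (filter_imp (fun i => d (f (c i)) (c (S i)) < rho)); [|exact (Hc rho Hrho)].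
  intros i Hi. rewrite <- h_conj by apply HcC. apply Hh; auto.
Qed.

Definition tracks (x : X) (c : nat -> X) (y : Y) : Prop :=
  (forall i, C (c i)) /\ asymptotic d (fun i => Nat.iter i f x) c /\
  asymptotic d' (fun i => Nat.iter i g y) (fun i => h (c i)).

Lemma tracking_exists x :
  uniformly_continuous_on d d (fun _ => True) f -> limit_shadowing d' g ->
  Ws d f C x -> exists c y, tracks x c y.
Proof.
  intros Hf Hshadow Hx.
  destruct (approximating_sequence d _ C Hx) as [c [HcC Hc]].
  destruct (Hshadow (fun i => h (c i))) as [y Hy].
  { apply pseudo_orbit_conj; [exact HcC|].
    exact (asymptotic_orbit_pseudo_orbit d Hd f x c Hf Hc). }
  exists c, y. repeat split; assumption.
Qed.

Lemma tracks_Vs D x c y :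
  Vs d f C D x -> tracks x c y -> Vs d' g C' (fun y => exists x, D x /\ y = h x) y.
Proof.
  intros Hx [HcC [Hxc Hyc]] del' Hdel'.
  destruct (D_delta_conj D del' Hdel') as [del [Hdel HD]].
  split.
  - intros eps Heps. destruct (Hyc eps Heps) as [N HN].
    exists N. intros i Hi. exists (h (c i)). split; [apply h_maps_C, HcC | exact (HN i Hi)].
  - intros eps Heps.
    destruct (h_unif (eps / 2) ltac:(lra)) as [rho [Hrho Hh]].
    destruct (proj2 (Hx del Hdel) (rho / 2) ltac:(lra)) as [N1 HN1].
    destruct (Hxc (rho / 2) ltac:(lra)) as [N2 HN2].
    destruct (Hyc (eps / 2) ltac:(lra)) as [N3 HN3].
    exists (max N1 (max N2 N3)). intros i Hi.
    destruct (HN1 i ltac:(lia)) as [z [[w [Hw ->]] Hxw]].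
    pose proof (HN2 i ltac:(lia)) as Hxc_i. pose proof (HN3 i ltac:(lia)) as Hyc_i.
    assert (HwC : C w) by apply Hw.
    exists (Nat.iter i g (h w)). split; [exists (h w); split; [apply HD, Hw | reflexivity]|].
    assert (Hclose : d' (h (c i)) (h (Nat.iter i f w)) < eps / 2).
    { apply Hh; [apply HcC | apply iter_invariant; assumption |].
      pose proof (dist_triangle d Hd (c i) (Nat.iter i f x) (Nat.iter i f w)) as T.
      rewrite (dist_sym d Hd (c i) (Nat.iter i f x)) in T. lra. }
    rewrite iter_conj in Hclose by exact HwC.
    pose proof (dist_triangle d' Hd' (Nat.iter i g y) (h (c i)) (Nat.iter i g (h w))).
    lra.
Qed.

Lemma tracks_separation del :
  0 < del -> exists rho, 0 < rho /\ forall x c y x' c' y',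
    tracks x c y -> tracks x' c' y' ->
    eventually (fun i => d (Nat.iter i f x) (Nat.iter i f x') > del ->
                         d' (Nat.iter i g y) (Nat.iter i g y') > rho).
Proof.
  intros Hdel. destruct (hinv_unif (del / 2) ltac:(lra)) as [rho [Hrho Hhinv]].
  exists (rho / 2). split; [lra|].
  intros x c y x' c' y' [HcC [Hxc Hyc]] [Hc'C [Hx'c' Hy'c']].
  apply (filter_imp (fun i =>
    Rabs (d (Nat.iter i f x) (Nat.iter i f x') - d (c i) (c' i)) < del / 2 /\
    Rabs (d' (Nat.iter i g y) (Nat.iter i g y') - d' (h (c i)) (h (c' i))) < rho / 2)).
  - intros i [Hi Hi'] Hsep. apply Rabs_def2 in Hi. apply Rabs_def2 in Hi'.
    apply Rnot_le_lt. intros Hle.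
    assert (Hc : d (hinv (h (c i))) (hinv (h (c' i))) < del / 2)
      by (apply Hhinv; [apply h_maps_C, HcC | apply h_maps_C, Hc'C | lra]).
    rewrite !hinv_h in Hc by auto. lra.
  - apply filter_and; [apply (dist_asymptotic_diff d Hd) | apply (dist_asymptotic_diff d' Hd')];
      try assumption; lra.
Qed.

Lemma tracks_proximity eps :
  0 < eps -> exists r, 0 < r /\ forall x c y x' c' y',
    tracks x c y -> tracks x' c' y' ->
    eventually (fun i => d (Nat.iter i f x) (Nat.iter i f x') < r ->
                         d' (Nat.iter i g y) (Nat.iter i g y') < eps).
Proof.
  intros Heps. destruct (h_unif (eps / 2) ltac:(lra)) as [r [Hr Hh]].
  exists (r / 2). split; [lra|].
  intros x c y x' c' y' [HcC [Hxc Hyc]] [Hc'C [Hx'c' Hy'c']].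
  apply (filter_imp (fun i =>
    Rabs (d (Nat.iter i f x) (Nat.iter i f x') - d (c i) (c' i)) < r / 2 /\
    Rabs (d' (Nat.iter i g y) (Nat.iter i g y') - d' (h (c i)) (h (c' i))) < eps / 2)).
  - intros i [Hi Hi'] Hclose. apply Rabs_def2 in Hi. apply Rabs_def2 in Hi'.
    assert (d' (h (c i)) (h (c' i)) < eps / 2) by (apply Hh; auto; lra).
    lra.
  - apply filter_and; [apply (dist_asymptotic_diff d Hd) | apply (dist_asymptotic_diff d' Hd')];
      try assumption; lra.
Qed.

Lemma scrambled_tracks F G n (a : nat -> X) (c : nat -> nat -> X) (b : nat -> Y) del :
  full_family F -> full_family G -> 0 < del ->
  (forall j, (j < n)%nat -> tracks (a j) (c j) (b j)) ->
  scrambled d f F G n a del -> exists del', 0 < del' /\ scrambled d' g F G n b del'.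
Proof.
  intros HF HG Hdel Htracks [HS HT].
  destruct (tracks_separation del Hdel) as [rho [Hrho Hsep]].
  exists rho. split; [exact Hrho|]. split.
  - apply (full_family_eventually_superset F _ _ HF HS).
    apply (filter_imp (fun i => forall j k, (j < k)%nat -> (k < n)%nat ->
      d (Nat.iter i f (a j)) (Nat.iter i f (a k)) > del ->
      d' (Nat.iter i g (b j)) (Nat.iter i g (b k)) > rho)).
    + intros i Hi HSi j k Hjk Hkn. exact (Hi j k Hjk Hkn (HSi j k Hjk Hkn)).
    + apply eventually_forall_pairs. intros j k Hjk Hkn.
      apply (Hsep _ (c j) _ _ (c k)); apply Htracks; lia.
  - intros eps Heps. destruct (tracks_proximity eps Heps) as [r [Hr Hprox]].
    apply (full_family_eventually_superset G _ _ HG (HT r Hr)).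
    apply (filter_imp (fun i => forall j k, (j < k)%nat -> (k < n)%nat ->
      d (Nat.iter i f (a j)) (Nat.iter i f (a k)) < r ->
      d' (Nat.iter i g (b j)) (Nat.iter i g (b k)) < eps)).
    + intros i Hi HTi j k Hjk Hkn. exact (Hi j k Hjk Hkn (HTi j k Hjk Hkn)).
    + apply eventually_forall_pairs. intros j k Hjk Hkn.
      apply (Hprox _ (c j) _ _ (c k)); apply Htracks; lia.
Qed.

End Conjugacy.

Theorem theorem1p3 (X Y : Type) (d : X -> X -> R) (d' : Y -> Y -> R)
  (f : X -> X) (g : Y -> Y)
  (C D : X -> Prop) (C' : Y -> Prop) (h : X -> Y) (hinv : Y -> X)
  (F G : (nat -> Prop) -> Prop) (n : nat) (del : R) (a : nat -> X) :
  is_metric d -> compact_space d -> is_metric d' -> compact_space d' ->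
  continuous_map d f -> continuous_map d' g ->
  chain_component d f C -> D_class d f C D -> chain_component d' g C' ->
  homeo_between d d' C C' h hinv ->
  (forall x, C x -> h (f x) = g (h x)) ->
  full_family F -> full_family G ->
  (2 <= n)%nat -> 0 < del ->
  limit_shadowing d' g ->
  (forall j, (j < n)%nat -> Vs d f C D (a j)) ->
  scrambled d f F G n a del ->
  exists (del' : R) (b : nat -> Y), 0 < del' /\
    (forall j, (j < n)%nat ->
       Vs d' g C' (fun y => exists x, D x /\ y = h x) (b j)) /\
    scrambled d' g F G n b del'.
Proof.
  intros Hd Hcpt Hd' Hcpt' Hf Hg HC _ HC' Hh Hconj HF HG Hn Hdel Hshadow HVs Hscr.
  destruct Hh as (Hh_maps & _ & Hhinv_h & _ & Hh_cont & Hhinv_cont).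
  assert (Hf_unif : uniformly_continuous_on d d (fun _ => True) f).
  { apply compact_uniformly_continuous_on; auto; [intros z _; exact I|].
    intros x eps _ Heps. destruct (Hf x eps Heps) as [r [Hr Hfr]]. eauto. }
  assert (Hh_unif : uniformly_continuous_on d d' C h)
    by (apply compact_uniformly_continuous_on; eauto using chain_component_closed).
  assert (Hhinv_unif : uniformly_continuous_on d' d C' hinv)
    by (apply compact_uniformly_continuous_on; eauto using chain_component_closed).
  assert (HCf : forall x, C x -> C (f x))
    by (intros x; apply (chain_component_invariant d Hd f C x Hf HC)).
  destruct (finite_choice (fun j p => tracks d d' f g C h (a j) (fst p) (snd p)) n)
    as [p Hp]; [lia| |].
  { intros j Hj.
    destruct (tracking_exists d d' f g C h Hd HCf Hconj Hh_unif (a j) Hf_unif Hshadow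
                (proj1 (HVs j Hj 1 Rlt_0_1))) as [c [y Hcy]].
    exists (c, y). exact Hcy. }
  destruct (scrambled_tracks d d' f g C C' h hinv Hd Hd' Hh_maps Hh_unif Hhinv_unif Hhinv_h
              F G n a _ (fun j => snd (p j)) del HF HG Hdel Hp Hscr)
    as [del' [Hdel' Hscr']].
  exists del', (fun j => snd (p j)). split; [exact Hdel'|]. split; [|exact Hscr'].
  intros j Hj. eapply tracks_Vs; eauto.
Qed.
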